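(* Let $K$ be a field with a non-trivial non-Archimedean valuation $|\cdot|$, let $X$ be a complete non-Archimedean normed space over $K$, and let $G$ be an additive (abelian) group. Fix $k\in\mathbb N$, and assume $|2k^4|\neq0$. For $f:G\to X$ define $$\Delta f(x,y)=f(kx+y)+f(kx-y)-k^2[f(x+y)+f(x-y)]-2k^2(k^2-1)f(x)+2(k^2-1)f(y)\qquad(x,y\in G).$$ Let $\psi:G\times G\to[0,\infty)$ be a function such that $$\lim_{n\to\infty}\frac{\psi(k^nx,k^ny)}{|k|^{4n}}=0\quad\text{for all }x,y\in G,$$ and such that for each $x\in G$ the limit $$\tilde\psi(x):=\lim_{n\to\infty}\max\Big\{\frac{\psi(k^jx,0)}{|k|^{4j}}:\ 0\le j<n\Big\}$$ exists. Suppose $f:G\to X$ satisfies $f(0)=0$ and $\|\Delta f(x,y)\|\le\psi(x,y)$ for all $x,y\in G$. Then there exists a quartic mapping $Q:G\to X$ (i.e. $\Delta Q(x,y)=0$ for all $x,y\in G$) such that $$\|Q(x)-f(x)\|\le\frac{1}{|2k^4|}\tilde\psi(x)\quad\text{for all }x\in G.$$ Moreover, if $$\lim_{i\to\infty}\lim_{n\to\infty}\max\Big\{\frac{\psi(k^jx,0)}{|k|^{4j}}:\ i\le j<n+i\Big\}=0\quad\text{for all }x\in G,$$ then $Q$ is the unique quartic mapping satisfying this inequality.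
   Context: A non-Archimedean field is a field $K$ with $|\cdot|:K\to[0,\infty)$ such that $|r|=0$ iff $r=0$, $|rs|=|r||s|$, $|r+s|\le\max\{|r|,|s|\}$. A non-Archimedean norm on a $K$-vector space $X$ satisfies $\|x\|=0$ iff $x=0$, $\|rx\|=|r|\|x\|$, $\|x+y\|\le\max\{\|x\|,\|y\|\}$; complete means every Cauchy sequence converges. Integers are regarded as elements of $K$ and $|k|$ is the valuation of $k$ in $K$. *)

From HB Require Import structures.
From mathcomp Require Import all_boot all_order all_algebra.
From mathcomp Require Import boolp classical_sets reals topology normedtype sequences.
Set Implicit Arguments. Unset Strict Implicit. Unset Printing Implicit Defensive.
Import Order.TTheory GRing.Theory Num.Theory.
Local Open Scope ring_scope.

Definition nonarch_abs (R : realType) (K : fieldType) (abs : K -> R) : Prop :=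
  (forall r, 0 <= abs r) /\
  (forall r, abs r = 0 <-> r = 0) /\
  (forall r s, abs (r * s) = abs r * abs s) /\
  (forall r s, abs (r + s) <= Num.max (abs r) (abs s)).

Definition nontrivial_abs (R : realType) (K : fieldType) (abs : K -> R) : Prop :=
  exists r : K, abs r != 0 /\ abs r != 1.

Definition nonarch_norm (R : realType) (K : fieldType) (abs : K -> R)
  (X : lmodType K) (nrm : X -> R) : Prop :=
  (forall x, 0 <= nrm x) /\
  (forall x, nrm x = 0 <-> x = 0) /\
  (forall (r : K) x, nrm (r *: x) = abs r * nrm x) /\
  (forall x y, nrm (x + y) <= Num.max (nrm x) (nrm y)).

Definition norm_cauchy (R : realType) (X : zmodType) (nrm : X -> R)
  (u : nat -> X) : Prop :=
  forall e : R, 0 < e -> exists N : nat, forall m n : nat,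
    (N <= m)%N -> (N <= n)%N -> nrm (u m - u n) < e.

Definition norm_converges (R : realType) (X : zmodType) (nrm : X -> R)
  (u : nat -> X) : Prop :=
  exists l : X, forall e : R, 0 < e -> exists N : nat, forall n : nat,
    (N <= n)%N -> nrm (u n - l) < e.

Definition norm_complete (R : realType) (X : zmodType) (nrm : X -> R) : Prop :=
  forall u : nat -> X, norm_cauchy nrm u -> norm_converges nrm u.

Definition Delta (K : fieldType) (X : lmodType K) (G : zmodType) (k : nat)
  (f : G -> X) (x y : G) : X :=
  let kk : K := k%:R in
  f (x *+ k + y) + f (x *+ k - y)
  - (kk ^+ 2) *: (f (x + y) + f (x - y))
  - (2 * kk ^+ 2 * (kk ^+ 2 - 1)) *: f x
  + (2 * (kk ^+ 2 - 1)) *: f y.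

Definition quartic (K : fieldType) (X : lmodType K) (G : zmodType) (k : nat)
  (Q : G -> X) : Prop :=
  forall x y : G, Delta k Q x y = 0.

From HB Require Import structures.
From mathcomp Require Import all_boot all_order all_algebra.
From mathcomp Require Import boolp classical_sets reals topology normedtype sequences.
From mathcomp Require Import ring.
Set Implicit Arguments. Unset Strict Implicit. Unset Printing Implicit Defensive.
Import Order.TTheory GRing.Theory Num.Theory.
Import numFieldNormedType.Exports.
Local Open Scope classical_set_scope.
Local Open Scope ring_scope.

(* The direct method of Hyers, in ultrametric form.  Setting y = 0 in Delta f
   gives 2 f(kx) - 2k^4 f(x) = Delta f(x,0) (as f 0 = 0), so the successive
   differences of f_n(x) := k^(-4n) f(k^n x) have norm at most
   psi(k^n x, 0) / (|2k^4| |k|^(4n)).  The strong triangle inequality turns the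
   telescoping sums into maxima: (f_n x) is Cauchy, and its limit Q x is within
   psi~(x) / |2k^4| of f x; Q is quartic because |Delta f_n(x,y)| <=
   psi(k^n x, k^n y) / |k|^(4n) -> 0.  A quartic map satisfies
   Q(k^i x) = k^(4i) Q(x), so two such approximations of f differ at x by at
   most the i-th tail of the maxima, for every i. *)

Section NonArchimedeanAbs.
Variables (R : realType) (K : fieldType) (abs : K -> R).
Hypothesis abs_na : nonarch_abs abs.

Lemma abs_ge0 r : 0 <= abs r.
Proof. by case: abs_na. Qed.

Lemma abs_eq0 r : (abs r == 0) = (r == 0).
Proof. by case: abs_na => _ [abs0 _]; apply/eqP/eqP => /abs0. Qed.

Lemma abs0 : abs 0 = 0.
Proof. by apply/eqP; rewrite abs_eq0. Qed.

Lemma absM r s : abs (r * s) = abs r * abs s.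
Proof. by case: abs_na => _ [_ []]. Qed.

Lemma abs1 : abs 1 = 1.
Proof.
have abs1_neq0 : abs 1 != 0 by rewrite abs_eq0 oner_eq0.
by apply: (mulfI abs1_neq0); rewrite -absM !mulr1.
Qed.

Lemma absN1 : abs (-1) = 1.
Proof. by apply/eqP; rewrite -sqrp_eq1 ?abs_ge0 // expr2 -absM mulrNN mulr1 abs1. Qed.

Lemma absV r : abs r^-1 = (abs r)^-1.
Proof.
have [->|r_neq0] := eqVneq r 0; first by rewrite invr0 abs0 invr0.
have absr_neq0 : abs r != 0 by rewrite abs_eq0.
by apply: (mulfI absr_neq0); rewrite -absM !mulfV // abs1.
Qed.

Lemma absX r n : abs (r ^+ n) = abs r ^+ n.
Proof. by elim: n => [|n IHn]; rewrite ?abs1 // !exprS absM IHn. Qed.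

End NonArchimedeanAbs.

Section BigMaxNat.
Variable R : realDomainType.

Lemma bigmax_nat_recr (F : nat -> R) n :
  \big[Num.max/0]_(0 <= j < n.+1) F j = Num.max (\big[Num.max/0]_(0 <= j < n) F j) (F n).
Proof.
rewrite /index_iota !subn0 -addn1 iotaD cats1 /=.
elim: (iota 0 n) => [|i s IHs]; first by rewrite big_cons !big_nil maxC.
by rewrite !big_cons IHs maxA.
Qed.

Lemma bigmax_pMr (I : Type) (r : seq I) (s : R) (F : I -> R) : 0 <= s ->
  \big[Num.max/0]_(i <- r) (s * F i) = s * \big[Num.max/0]_(i <- r) F i.
Proof. by move=> s_ge0; elim/big_ind2: _ => [|a b c d -> ->|//]; rewrite ?mulr0 ?maxr_pMr. Qed.

End BigMaxNat.

Section QuarticDifference.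
Variables (K : fieldType) (X : lmodType K) (G : zmodType) (k : nat).
Local Notation kk := (k%:R : K).

Definition Delta_terms (x y : G) : seq (K * G) :=
  [:: (1, x *+ k + y); (1, x *+ k - y); (- kk ^+ 2, x + y); (- kk ^+ 2, x - y);
      (- (2 * kk ^+ 2 * (kk ^+ 2 - 1)), x); (2 * (kk ^+ 2 - 1), y)].

Lemma DeltaE (f : G -> X) x y :
  Delta k f x y = \sum_(p <- Delta_terms x y) p.1 *: f p.2.
Proof. by rewrite /Delta !big_cons big_nil addr0 !scale1r !scaleNr scalerDr opprD !addrA. Qed.

Lemma DeltaB (f g : G -> X) x y :
  Delta k (fun z => f z - g z) x y = Delta k f x y - Delta k g x y.
Proof. by rewrite !DeltaE -sumrB; apply: eq_bigr => p _; rewrite scalerBr. Qed.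

Lemma DeltaZ (c : K) (f : G -> X) x y :
  Delta k (fun z => c *: f z) x y = c *: Delta k f x y.
Proof. by rewrite !DeltaE scaler_sumr; apply: eq_bigr => p _; rewrite !scalerA mulrC. Qed.

Lemma Delta_mulrn (f : G -> X) N x y :
  Delta k (fun z => f (z *+ N)) x y = Delta k f (x *+ N) (y *+ N).
Proof. by rewrite /Delta !mulrnDl !mulNrn [x *+ k *+ N]mulrnAC. Qed.

Lemma Delta_y0 (f : G -> X) x :
  Delta k f x 0 = 2 *: f (x *+ k) - (2 * kk ^+ 4) *: f x + (2 * (kk ^+ 2 - 1)) *: f 0.
Proof.
rewrite /Delta !addr0 !subr0; congr (_ + _).
rewrite -!mulr2n -!scaler_nat !scalerA -addrA -opprD -scalerDl.
by congr (_ *: _ - _ *: _); ring.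
Qed.

Section Homogeneity.
Hypotheses (two_neq0 : (2 : K) != 0) (k_neq0 : kk != 0).

Lemma quartic_mulrn (h : G -> X) : quartic k h -> forall x, h (x *+ k) = kk ^+ 4 *: h x.
Proof.
move=> hq x.
have h0 : (2 * (kk ^+ 2 - 1)) *: h 0 = 0.
  have nk2 : - kk ^+ 2 != 0 by rewrite oppr_eq0 expf_neq0.
  apply: (scalerI nk2); rewrite scaler0 scalerA -[RHS](hq 0 0) Delta_y0 mul0rn.
  by rewrite -!scalerBl -scalerDl; congr (_ *: _); ring.
have := hq x 0; rewrite Delta_y0 h0 addr0 => /eqP; rewrite subr_eq0 => /eqP.
by rewrite -scalerA => /(scalerI two_neq0).
Qed.

Lemma quartic_mulrn_expn (h : G -> X) : quartic k h ->
  forall x i, h (x *+ (k ^ i)) = kk ^+ (4 * i) *: h x.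
Proof.
move=> hq x; elim=> [|i IHi]; first by rewrite expn0 mulr1n muln0 expr0 scale1r.
by rewrite expnSr mulrnA quartic_mulrn // IHi scalerA -exprD mulnS addnC.
Qed.

End Homogeneity.

End QuarticDifference.

Section NonArchimedeanNorm.
Variables (R : realType) (K : fieldType) (abs : K -> R).
Variables (X : lmodType K) (nrm : X -> R).
Hypotheses (abs_na : nonarch_abs abs) (nrm_na : nonarch_norm abs nrm).

Lemma nrm_ge0 x : 0 <= nrm x.
Proof. by case: nrm_na. Qed.

Lemma nrm_eq0 x : (nrm x == 0) = (x == 0).
Proof. by case: nrm_na => _ [nrm0 _]; apply/eqP/eqP => /nrm0. Qed.

Lemma nrm0 : nrm 0 = 0.
Proof. by apply/eqP; rewrite nrm_eq0. Qed.

Lemma nrmZ r x : nrm (r *: x) = abs r * nrm x.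
Proof. by case: nrm_na => _ [_ []]. Qed.

Lemma nrmN x : nrm (- x) = nrm x.
Proof. by rewrite -scaleN1r nrmZ absN1 // mul1r. Qed.

Lemma nrm_distC x y : nrm (x - y) = nrm (y - x).
Proof. by rewrite -nrmN opprB. Qed.

Lemma nrmD_le x y e : nrm x <= e -> nrm y <= e -> nrm (x + y) <= e.
Proof.
case: nrm_na => _ [_ [_ nrm_ultra]] x_le y_le.
by apply: le_trans (nrm_ultra x y) _; rewrite ge_max x_le.
Qed.

Lemma nrmD_lt x y e : nrm x < e -> nrm y < e -> nrm (x + y) < e.
Proof.
case: nrm_na => _ [_ [_ nrm_ultra]] x_lt y_lt.
by apply: le_lt_trans (nrm_ultra x y) _; rewrite gt_max x_lt.
Qed.

Lemma nrm_cvg0Z (r : K) (u : nat -> X) :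
  nrm (u n) @[n --> \oo] --> 0 -> nrm (r *: u n) @[n --> \oo] --> 0.
Proof.
move=> u0; under eq_fun do rewrite nrmZ.
by rewrite -(mulr0 (abs r)); apply: cvgMl_tmp.
Qed.

Lemma nrm_cvg0D (u v : nat -> X) :
  nrm (u n) @[n --> \oo] --> 0 -> nrm (v n) @[n --> \oo] --> 0 ->
  nrm (u n + v n) @[n --> \oo] --> 0.
Proof.
move=> u0 v0; have uv0 : nrm (u n) + nrm (v n) @[n --> \oo] --> 0.
  by rewrite -[0]addr0; apply: cvgD.
apply: squeeze_cvgr (cvg_cst 0) uv0; apply: nearW => n.
by rewrite nrm_ge0 /=; apply: nrmD_le; rewrite ?lerDl ?lerDr nrm_ge0.
Qed.

Lemma nrm_cvg0_sum (I : Type) (s : seq I) (u : nat -> I -> X) :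
  (forall i, nrm (u n i) @[n --> \oo] --> 0) ->
  nrm (\sum_(i <- s) u n i) @[n --> \oo] --> 0.
Proof.
move=> u0; elim: s => [|i s IHs].
  by under eq_fun do rewrite big_nil nrm0; exact: cvg_cst.
by under eq_fun do rewrite big_cons; exact: nrm_cvg0D.
Qed.

Lemma nrm_cvg0_cst x : nrm x @[_ --> \oo] --> 0 -> x = 0.
Proof. by move/(cvg_lim (@Rhausdorff R)); rewrite lim_cst // => /eqP; rewrite nrm_eq0 => /eqP. Qed.

Lemma norm_complete_cvg (u : nat -> X) : norm_complete nrm -> norm_cauchy nrm u ->
  exists l, nrm (u n - l) @[n --> \oo] --> 0.
Proof.
move=> complete /complete [l ul]; exists l; apply/cvgr0Pnorm_lt => e e0.
have [N uNl] := ul e e0; exists N => // n /uNl.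
by rewrite ger0_norm ?nrm_ge0.
Qed.

Lemma ultrametric_cauchy (u : nat -> X) (b : nat -> R) :
  (forall n, nrm (u n.+1 - u n) <= b n) -> b n @[n --> \oo] --> 0 -> norm_cauchy nrm u.
Proof.
move=> ub b0 e e0; have [N _ bN] := cvgr_dist_lt _ _ b0 _ e0.
have shift_lt n d : (N <= n)%N -> nrm (u (n + d)%N - u n) < e.
  move=> Nn; elim: d => [|d IHd]; first by rewrite addn0 subrr nrm0.
  rewrite addnS -(subrK (u (n + d)%N) (u _)) -addrA; apply: nrmD_lt IHd.
  apply: le_lt_trans (ub _) (le_lt_trans (ler_norm _) _).
  by rewrite -normrN -sub0r; apply: bN; rewrite /= (leq_trans Nn) ?leq_addr.
exists N => m n Nm Nn; wlog nm : m n Nm Nn / (n <= m)%N => [hwlog|].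
  by case: (leqP n m) => [|/ltnW] nm; [exact: hwlog | rewrite nrm_distC; exact: hwlog].
by rewrite -(subnKC nm); exact: shift_lt.
Qed.

Lemma ultrametric_telescope (u : nat -> X) (b : nat -> R) n :
  (forall j, nrm (u j.+1 - u j) <= b j) ->
  nrm (u n - u 0%N) <= \big[Num.max/0]_(0 <= j < n) b j.
Proof.
move=> ub; elim: n => [|n IHn]; first by rewrite subrr nrm0 big_geq.
rewrite bigmax_nat_recr -(subrK (u n) (u n.+1)) -addrA.
by apply: nrmD_le; [apply: le_trans (ub n) _ | apply: le_trans IHn _];
  rewrite le_max lexx ?orbT.
Qed.

Lemma nrm_lim_le (u : nat -> X) (l v : X) (B : R) :
  nrm (u n - l) @[n --> \oo] --> 0 -> (forall n, nrm (u n - v) <= B) -> nrm (l - v) <= B.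
Proof.
move=> ul uB; have B_ge0 : 0 <= B := le_trans (nrm_ge0 _) (uB 0%N).
apply/ler_addgt0Pr => e e0; have [N _ uNl] := cvgr_dist_lt _ _ ul _ e0.
rewrite -(subrK (u N) l) -addrA; apply: nrmD_le.
  rewrite nrm_distC; apply/ltW/(@lt_le_trans _ _ e); last by rewrite lerDr.
  by apply: le_lt_trans (ler_norm _) _; rewrite -normrN -sub0r; apply: uNl => /=.
by apply: le_trans (uB N) _; rewrite lerDl ltW.
Qed.

Lemma quartic_lim (G : zmodType) (k : nat) (g : nat -> G -> X) (Q : G -> X) :
  (forall z, nrm (g n z - Q z) @[n --> \oo] --> 0) ->
  (forall x y, nrm (Delta k (g n) x y) @[n --> \oo] --> 0) -> quartic k Q.
Proof.
move=> gQ Dg x y; apply: nrm_cvg0_cst.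
have DQg : nrm (Delta k Q x y - Delta k (g n) x y) @[n --> \oo] --> 0.
  under eq_fun do rewrite -DeltaB DeltaE.
  apply: nrm_cvg0_sum => p; apply: (nrm_cvg0Z p.1 (u := fun n => Q p.2 - g n p.2)).
  by under eq_fun do rewrite nrm_distC; exact: (gQ p.2).
have := nrm_cvg0D (Dg x y) DQg.
by under eq_fun do rewrite addrC subrK.
Qed.

End NonArchimedeanNorm.

Section Stability.
Variables (R : realType) (K : fieldType) (abs : K -> R).
Variables (X : lmodType K) (nrm : X -> R).
Variables (G : zmodType) (k : nat) (psi : G -> G -> R) (f : G -> X).
Hypotheses (abs_na : nonarch_abs abs) (nrm_na : nonarch_norm abs nrm).
Hypothesis D_neq0 : abs ((2 * k ^ 4)%N%:R) != 0.
Hypothesis psi_scaled0 : forall x y,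
  psi (x *+ (k ^ n)) (y *+ (k ^ n)) / abs (k%:R) ^+ (4 * n) @[n --> \oo] --> 0.
Hypothesis f0 : f 0 = 0.
Hypothesis Delta_f_le : forall x y, nrm (Delta k f x y) <= psi x y.

Local Notation kk := (k%:R : K).
Local Notation D := (abs ((2 * k ^ 4)%N%:R)).

Definition psi_scaled x j := psi (x *+ (k ^ j)) 0 / abs kk ^+ (4 * j).
Definition psi_max x n := \big[Num.max/0]_(0 <= j < n) psi_scaled x j.
Definition psi_tilde x := limn (psi_max x).
Definition psi_tail x i := limn (fun n => \big[Num.max/0]_(i <= j < n + i) psi_scaled x j).
Definition f_scaled n x := (kk ^+ (4 * n))^-1 *: f (x *+ (k ^ n)).

Lemma natr_2k4 : (2 * k ^ 4)%N%:R = 2 * kk ^+ 4.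
Proof. by rewrite natrM natrX. Qed.

Lemma two_k4_neq0 : 2 * kk ^+ 4 != 0.
Proof. by apply: contra_neq D_neq0; rewrite natr_2k4 => ->; exact: abs0. Qed.

Lemma two_neq0 : (2 : K) != 0.
Proof. by move: two_k4_neq0; rewrite mulf_eq0 negb_or => /andP []. Qed.

Lemma k_neq0 : kk != 0.
Proof. by move: two_k4_neq0; rewrite mulf_eq0 negb_or expf_eq0 => /andP []. Qed.

Lemma abs_k_gt0 : 0 < abs kk.
Proof. by rewrite lt_def abs_eq0 // k_neq0 abs_ge0. Qed.

Lemma abs_kX_neq0 n : abs kk ^+ n != 0.
Proof. by rewrite expf_neq0 // gt_eqF ?abs_k_gt0. Qed.

Lemma invD_ge0 : 0 <= D^-1.
Proof. by rewrite invr_ge0 abs_ge0. Qed.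

Lemma psi_scaled_cvg0 x : psi_scaled x n @[n --> \oo] --> 0.
Proof. by have := psi_scaled0 x 0; under eq_fun do rewrite mul0rn. Qed.

Lemma f_scaled_succ x n : nrm (f_scaled n.+1 x - f_scaled n x) <= D^-1 * psi_scaled x n.
Proof.
have -> : f_scaled n.+1 x - f_scaled n x =
    (2 * kk ^+ 4 * kk ^+ (4 * n))^-1 *: Delta k f (x *+ (k ^ n)) 0.
  rewrite Delta_y0 f0 scaler0 addr0 scalerBr !scalerA -mulrnA -expnSr.
  congr (_ *: _ - _ *: _); rewrite ?mulnS ?exprD; field;
  by rewrite expf_neq0 ?k_neq0 //=; move: two_neq0.
rewrite (nrmZ nrm_na) (absV abs_na) (absM abs_na) -natr_2k4 (absX abs_na) invfM -mulrA.
apply: ler_wpM2l; first exact: invD_ge0.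
rewrite mulrC; apply: ler_wpM2r; last exact: Delta_f_le.
by rewrite invr_ge0 exprn_ge0 ?abs_ge0.
Qed.

Lemma f_scaled_cauchy x : norm_cauchy nrm (fun n => f_scaled n x).
Proof.
apply: (ultrametric_cauchy abs_na nrm_na (f_scaled_succ x)).
by rewrite -(mulr0 D^-1); apply: cvgMl_tmp; exact: psi_scaled_cvg0.
Qed.

Lemma f_scaled_bound x n : nrm (f_scaled n x - f x) <= D^-1 * psi_max x n.
Proof.
have -> : f x = f_scaled 0 x by rewrite /f_scaled muln0 expr0 invr1 scale1r expn0 mulr1n.
rewrite /psi_max -bigmax_pMr ?invD_ge0 //.
exact: (ultrametric_telescope nrm_na _ (f_scaled_succ x)).
Qed.

Hypothesis psi_max_cvg : forall x, cvgn (psi_max x).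

Lemma psi_max_le x n : psi_max x n <= psi_tilde x.
Proof.
have psi_max_nd : {homo psi_max x : m n / (m <= n)%N >-> m <= n}.
  by apply/nondecreasing_seqP => m; rewrite /psi_max bigmax_nat_recr le_max lexx.
exact: nondecreasing_cvgn_le psi_max_nd (@psi_max_cvg x) n.
Qed.

Lemma f_scaled_lim_quartic (Q : G -> X) :
  (forall x, nrm (f_scaled n x - Q x) @[n --> \oo] --> 0) -> quartic k Q.
Proof.
move=> fQ; apply: (quartic_lim abs_na nrm_na fQ) => x y.
apply: squeeze_cvgr (cvg_cst 0) (psi_scaled0 x y); apply: nearW => n.
rewrite (nrm_ge0 nrm_na) /f_scaled (DeltaZ k _ (fun z => f (z *+ (k ^ n)))) Delta_mulrn.
rewrite (nrmZ nrm_na) (absV abs_na) (absX abs_na) mulrC /=.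
by apply: ler_wpM2r; [rewrite invr_ge0 exprn_ge0 ?abs_ge0 | exact: Delta_f_le].
Qed.

Lemma f_scaled_lim_bound (Q : G -> X) x :
  (forall x, nrm (f_scaled n x - Q x) @[n --> \oo] --> 0) ->
  nrm (Q x - f x) <= D^-1 * psi_tilde x.
Proof.
move=> fQ; apply: (nrm_lim_le abs_na nrm_na (fQ x)) => n.
apply: le_trans (f_scaled_bound x n) _.
by apply: ler_wpM2l; [exact: invD_ge0 | exact: psi_max_le].
Qed.

Lemma psi_max_mulrn x i n :
  psi_max (x *+ (k ^ i)) n =
  abs kk ^+ (4 * i) * \big[Num.max/0]_(i <= j < n + i) psi_scaled x j.
Proof.
have -> : \big[Num.max/0]_(i <= j < n + i) psi_scaled x j =
          \big[Num.max/0]_(0 <= j < n) psi_scaled x (j + i).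
  by rewrite -{1}[i]add0n big_addn addnK.
rewrite /psi_max -bigmax_pMr ?exprn_ge0 ?abs_ge0 //; apply: eq_bigr => j _.
rewrite /psi_scaled -mulrnA -expnD addnC mulnDr exprD; field.
by rewrite !abs_kX_neq0.
Qed.

Lemma psi_tail_psi_tilde x i :
  psi_tail x i = (abs kk ^+ (4 * i))^-1 * psi_tilde (x *+ (k ^ i)).
Proof.
rewrite /psi_tail; suff -> : (fun n => \big[Num.max/0]_(i <= j < n + i) psi_scaled x j) =
          (fun n => (abs kk ^+ (4 * i))^-1 * psi_max (x *+ (k ^ i)) n).
  by apply: cvg_lim => //; exact: cvgMl_tmp (@psi_max_cvg _).
by apply/funext => n; rewrite psi_max_mulrn mulKf ?abs_kX_neq0.
Qed.

Lemma quartic_approx_unique (Q Q' : G -> X) :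
  quartic k Q -> quartic k Q' ->
  (forall x, nrm (Q x - f x) <= D^-1 * psi_tilde x) ->
  (forall x, nrm (Q' x - f x) <= D^-1 * psi_tilde x) ->
  (forall x, psi_tail x i @[i --> \oo] --> 0) -> Q' = Q.
Proof.
move=> qQ qQ' Q_le Q'_le tail0; apply/funext => x.
have QQ'_le i : nrm (Q' x - Q x) <= D^-1 * psi_tail x i.
  set z := x *+ (k ^ i).
  have QQ'z_le : nrm (Q' z - Q z) <= D^-1 * psi_tilde z.
    rewrite -(subrK (f z) (Q' z)) -addrA; apply: (nrmD_le nrm_na) => //.
    by rewrite (nrm_distC abs_na nrm_na).
  rewrite !(quartic_mulrn_expn two_neq0 k_neq0) // -scalerBr in QQ'z_le.
  rewrite (nrmZ nrm_na) (absX abs_na) in QQ'z_le.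
  by rewrite psi_tail_psi_tilde mulrCA ler_pdivlMl ?exprn_gt0 ?abs_k_gt0.
have tail0' : D^-1 * psi_tail x i @[i --> \oo] --> 0.
  by rewrite -(mulr0 D^-1); exact: cvgMl_tmp.
apply/eqP; rewrite -subr_eq0 -(nrm_eq0 nrm_na) eq_le (nrm_ge0 nrm_na) andbT.
rewrite -(cvg_lim _ tail0') //; apply: limr_ge; [exact: cvgP tail0' | exact: nearW].
Qed.

End Stability.

Theorem theorem3p1 (R : realType) (K : fieldType) (abs : K -> R)
  (X : lmodType K) (nrm : X -> R) (G : zmodType) (k : nat)
  (psi : G -> G -> R) (f : G -> X) :
  nonarch_abs abs -> nontrivial_abs abs ->
  nonarch_norm abs nrm -> norm_complete nrm ->
  abs ((2 * k ^ 4)%N%:R) != 0 ->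
  (forall x y, 0 <= psi x y) ->
  (forall x y, (fun n : nat => psi (x *+ (k ^ n)) (y *+ (k ^ n))
                               / abs (k%:R) ^+ (4 * n)) @ \oo --> (0 : R)) ->
  (forall x, cvgn (fun n : nat =>
       \big[Num.max/0]_(0 <= j < n) (psi (x *+ (k ^ j)) 0 / abs (k%:R) ^+ (4 * j)))) ->
  f 0 = 0 ->
  (forall x y, nrm (Delta k f x y) <= psi x y) ->
  exists Q : G -> X,
    quartic k Q /\
    (forall x, nrm (Q x - f x) <=
       (abs ((2 * k ^ 4)%N%:R))^-1 *
       limn (fun n : nat =>
         \big[Num.max/0]_(0 <= j < n) (psi (x *+ (k ^ j)) 0 / abs (k%:R) ^+ (4 * j)))) /\
    ((forall x, (fun i : nat =>
        limn (fun n : nat =>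
          \big[Num.max/0]_(i <= j < n + i) (psi (x *+ (k ^ j)) 0 / abs (k%:R) ^+ (4 * j))))
        @ \oo --> (0 : R)) ->
     forall Q' : G -> X, quartic k Q' ->
       (forall x, nrm (Q' x - f x) <=
          (abs ((2 * k ^ 4)%N%:R))^-1 *
          limn (fun n : nat =>
            \big[Num.max/0]_(0 <= j < n) (psi (x *+ (k ^ j)) 0 / abs (k%:R) ^+ (4 * j)))) ->
       Q' = Q).
Proof.
move=> abs_na _ nrm_na complete D_neq0 _ psi_scaled0 psi_max_cvg f0 Delta_f_le.
have f_scaled_lim x : exists l, nrm (f_scaled k f n x - l) @[n --> \oo] --> 0.
  apply: (norm_complete_cvg nrm_na complete).
  exact: f_scaled_cauchy abs_na nrm_na D_neq0 psi_scaled0 f0 Delta_f_le x.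
have [Q f_scaled_cvg] := choice f_scaled_lim.
have qQ := f_scaled_lim_quartic abs_na nrm_na psi_scaled0 Delta_f_le f_scaled_cvg.
have Q_le x := f_scaled_lim_bound abs_na nrm_na D_neq0 f0 Delta_f_le psi_max_cvg x f_scaled_cvg.
exists Q; split=> //; split=> // tail0 Q' qQ' Q'_le.
exact: (quartic_approx_unique (f := f) abs_na nrm_na D_neq0 psi_max_cvg
  qQ qQ' Q_le Q'_le tail0).
Qed.
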